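(* For every integer $n\geq 2$, the path $P_n$ on $n$ vertices satisfies $\operatorname{th}_{\operatorname{H}}(P_n)=\lceil 2\sqrt{n-1}\rceil$.
   Context: All graphs are finite, simple and undirected. Hopping color change rule: a blue vertex $v$ may force a white vertex $w$ to become blue if $v$ has not previously performed a force and every neighbor of $v$ is blue. For an initial blue set $B$, a chronological list of forces of $B$ is a sequence of such forces applied one at a time until no further force is possible; its underlying unordered set is a set of forces of $B$. $B$ is a hopping forcing set if some chronological list of forces of $B$ turns all vertices blue. For a set of forces $\mathcal F$ of $B$, let $\mathcal F^{(0)}=B$ and for $t\geq1$ let $\mathcal F^{(t)}$ be the set of vertices $w\notin U_{t-1}:=\bigcup_{i=0}^{t-1}\mathcal F^{(i)}$ for which there is $(v\to w)\in\mathcal F$ with $v\in U_{t-1}$ and all neighbors of $v$ in $U_{t-1}$. $\operatorname{pt}_{\operatorname{H}}(G;\mathcal F)$ is the least $t$ with $\bigcup_{i=0}^t\mathcal F^{(i)}=V(G)$ ($\infty$ if none); $\operatorname{pt}_{\operatorname{H}}(G;B)$ is the minimum of $\operatorname{pt}_{\operatorname{H}}(G;\mathcal F)$ over sets of forces $\mathcal F$ of $B$ ($\infty$ if $B$ is not a hopping forcing set). $\operatorname{th}_{\operatorname{H}}(G)=\min_{B\subseteq V(G)}\big(|B|+\operatorname{pt}_{\operatorname{H}}(G;B)\big)$. *)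

From HB Require Import structures.
From mathcomp Require Import all_boot all_order all_algebra.
From mathcomp Require Import Rstruct.

Set Implicit Arguments.
Unset Strict Implicit.
Unset Printing Implicit Defensive.

Section Hopping.
Variables (T : finType) (e : rel T).
Definition simple_graph := symmetric e /\ irreflexive e.

Definition nbrs (v : T) : {set T} := [set u | e v u].

(* v may force w when the current blue set is S and the set of vertices that
   have already performed a force is used. *)
Definition can_force (S used : {set T}) (v w : T) : bool :=
  [&& v \in S, w \notin S, v \notin used & nbrs v \subset S].

Fixpoint chrono_ok (S used : {set T}) (s : seq (T * T)) : bool :=
  if s is (v, w) :: s' then can_force S used v w && chrono_ok (w |: S) (v |: used) s'
  else true.

Definition blue_after (B : {set T}) (s : seq (T * T)) : {set T} :=
  B :|: [set p.2 | p in [set q in s]].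
Definition forcers (s : seq (T * T)) : {set T} := [set p.1 | p in [set q in s]].

Definition chrono_list (B : {set T}) (s : seq (T * T)) : bool :=
  chrono_ok B set0 s &&
  ~~ [exists v, exists w, can_force (blue_after B s) (forcers s) v w].

Definition set_of_forces (B : {set T}) (F : {set T * T}) : Prop :=
  exists s, chrono_list B s /\ F = [set q in s].

Definition hopping_forcing_set (B : {set T}) : Prop :=
  exists s, chrono_list B s /\ blue_after B s = [set: T].

Fixpoint blue_at (B : {set T}) (F : {set T * T}) (t : nat) : {set T} :=
  if t is t'.+1 then
    let U := blue_at B F t' in
    U :|: [set w | [exists v, [&& (v, w) \in F, v \in U & nbrs v \subset U]]]
  else B.

Definition pt_H_set_is (B : {set T}) (F : {set T * T}) (t : nat) : Prop :=
  blue_at B F t = [set: T] /\ forall t', blue_at B F t' = [set: T] -> t <= t'.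

(* th_H(G) = k : k is the minimum of |B| + pt_H(G;B) over all B, where
   pt_H(G;B) is the minimum over sets of forces F of B of pt_H(G;F)
   (infinite values never attain the minimum). *)
Definition th_H_is (k : nat) : Prop :=
  (exists B F t, hopping_forcing_set B /\ set_of_forces B F /\
     blue_at B F t = [set: T] /\ #|B| + t = k) /\
  (forall B F t, hopping_forcing_set B -> set_of_forces B F ->
     blue_at B F t = [set: T] -> k <= #|B| + t).
End Hopping.

Definition path_graph (n : nat) : rel 'I_n :=
  fun i j => (i.+1 == j :> nat) || (j.+1 == i :> nat).
Arguments path_graph : clear implicits.

From mathcomp Require Import all_boot all_order all_algebra.
From mathcomp Require Import Rstruct.
From mathcomp Require Import zify.
Import Order.TTheory GRing.Theory Num.Theory.

Set Implicit Arguments.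
Unset Strict Implicit.
Unset Printing Implicit Defensive.

(* A vertex can force only after it and all its neighbours are
   blue, and it forces at most once; hence by round i+1 at most |B| plus the
   number of such "ready" vertices of U_i are blue.  In a connected graph a
   proper blue set contains a non-ready vertex, so |U_(i+1)| <= |B| + |U_i| - 1
   and n <= b + t(b - 1), i.e. n - 1 <= (b - 1)(t + 1) <= ((b + t)/2)^2.
   Upper bound.  On P_n take B = {0, ..., d} and let each v force v + d + 1:
   every round turns d more vertices blue; d = floor(k/2) with k the least
   integer satisfying 4(n - 1) <= k^2 finishes within k - d - 1 rounds. *)

Section ChronologicalList.
Variables (T : finType) (e : rel T).

Lemma chrono_ok_forcer_unused S used s v w :
  chrono_ok e S used s -> (v, w) \in s -> v \notin used.
Proof.
elim: s S used => [|[v0 w0] s IH] S used //= /andP[force_ok s_ok].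
rewrite inE => /orP[/eqP[-> _] | vw_s]; first by case/and4P: force_ok.
by have := IH _ _ s_ok vw_s; rewrite inE negb_or => /andP[].
Qed.

Lemma chrono_ok_functional S used s v w w' :
  chrono_ok e S used s -> (v, w) \in s -> (v, w') \in s -> w = w'.
Proof.
elim: s S used => [|[v0 w0] s IH] S used //= /andP[_ s_ok].
have v0_fresh x : (v0, x) \notin s.
  by apply/negP=> /(chrono_ok_forcer_unused s_ok); rewrite !inE eqxx.
rewrite !inE => /orP[/eqP[-> ->] | vw_s] /orP[/eqP vw' | vw'_s].
- by case: vw'.
- by rewrite (negPf (v0_fresh _)) in vw'_s.
- by case: vw' vw_s => -> _; rewrite (negPf (v0_fresh _)).
- exact: IH s_ok vw_s vw'_s.
Qed.

Lemma set_of_forces_functional B F v w w' :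
  set_of_forces e B F -> (v, w) \in F -> (v, w') \in F -> w = w'.
Proof.
case=> s [/andP[s_ok _] ->]; rewrite !inE.
exact: chrono_ok_functional s_ok.
Qed.

End ChronologicalList.

Section HoppingRounds.
Variables (T : finType) (e : rel T).

Definition ready (U : {set T}) : {set T} := [set v in U | nbrs e v \subset U].

Lemma ready_sub (U : {set T}) : ready U \subset U.
Proof. by apply/subsetP=> v; rewrite inE => /andP[]. Qed.

Lemma ready_mono (U V : {set T}) : U \subset V -> ready U \subset ready V.
Proof.
move=> sUV; apply/subsetP=> v; rewrite !inE => /andP[vU nbrs_vU].
by rewrite (subsetP sUV) // (subset_trans nbrs_vU sUV).
Qed.

Variables (B : {set T}) (F : {set T * T}).

Lemma blue_at_subS i : blue_at e B F i \subset blue_at e B F i.+1.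
Proof. exact: subsetUl. Qed.

Lemma blue_at_mono i j : i <= j -> blue_at e B F i \subset blue_at e B F j.
Proof.
move/subnK <-; elim: (j - i) => [|k IH] //.
by rewrite addSn (subset_trans IH) // blue_at_subS.
Qed.

Lemma blue_at_full_mono i j :
  i <= j -> blue_at e B F i = setT -> blue_at e B F j = setT.
Proof.
by move=> le_ij full_i; apply/eqP; rewrite eqEsubset subsetT -full_i blue_at_mono.
Qed.

Lemma blue_atS_source i w :
  w \in blue_at e B F i.+1 ->
  w \in B \/ exists2 v, v \in ready (blue_at e B F i) & (v, w) \in F.
Proof.
have new_source (U : {set T}) :
    w \in [set w | [exists v, [&& (v, w) \in F, v \in U & nbrs e v \subset U]]] ->
    exists2 v, v \in ready U & (v, w) \in F.
  by rewrite inE => /existsP[v /and3P[vwF vU nbrs_vU]]; exists v; rewrite ?inE ?vU.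
elim: i => [|i IH] /setUP[wU | /new_source]; [by left | by right | | by right].
case/IH: wU => [|[v v_ready vwF]]; first by left.
by right; exists v => //; apply: (subsetP (ready_mono (blue_at_subS i))).
Qed.

Lemma card_blue_atS i :
  (forall v w w', (v, w) \in F -> (v, w') \in F -> w = w') ->
  #|blue_at e B F i.+1| <= #|B| + #|ready (blue_at e B F i)|.
Proof.
move=> F_functional; set FR := [set p in F | p.1 \in ready (blue_at e B F i)].
have sub_targets : blue_at e B F i.+1 \subset B :|: [set p.2 | p in FR].
  apply/subsetP=> w /blue_atS_source[wB | [v vR vwF]]; rewrite inE ?wB //.
  by apply/orP; right; apply/imsetP; exists (v, w) => //; apply/setIdP.
apply: leq_trans (subset_leq_card sub_targets) _.
apply: leq_trans (leq_card_setU _ _) _; rewrite leq_add2l.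
apply: leq_trans (leq_imset_card _ _) _.
have <- : #|[set p.1 | p in FR]| = #|FR|.
  apply: card_in_imset => -[v1 w1] [v2 w2] /setIdP[vw1 _] /setIdP[vw2 _] /= ev.
  by rewrite -ev in vw2 *; rewrite (F_functional _ _ _ vw1 vw2).
by apply/subset_leq_card/subsetP=> _ /imsetP[p /setIdP[_ p1R] ->].
Qed.

Definition connected_graph : Prop :=
  forall U : {set T}, (forall x y, e x y -> x \in U -> y \in U) ->
  U != set0 -> U = setT.

Hypothesis e_connected : connected_graph.

Lemma card_ready_lt (U : {set T}) : U != setT -> #|ready U| <= #|U| - 1.
Proof.
move=> U_proper; have [->|U_nonempty] := eqVneq U set0.
  by rewrite (leq_trans (subset_leq_card (ready_sub set0))) ?cards0.
have : [exists x, exists y, [&& x \in U, y \notin U & e x y]].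
  apply: contraNT U_proper => no_edge_out; apply/eqP/e_connected => // x y exy xU.
  apply/negPn/negP=> yU'; case/negP: no_edge_out.
  by apply/existsP; exists x; apply/existsP; exists y; rewrite xU yU'.
case/existsP=> x /existsP[y /and3P[xU yU' exy]].
suff : #|ready U| < #|U| by lia.
apply/proper_card/properP; split; first exact: ready_sub.
exists x => //; rewrite inE xU /=; apply: contra yU' => /subsetP; apply.
by rewrite inE.
Qed.

Lemma card_blue_at_le i :
  set_of_forces e B F ->
  #|blue_at e B F i| <= #|B| + i * #|B|.-1.
Proof.
move=> F_forces; elim: i => [|i IH]; first by rewrite addn0.
have [full_i | proper_i] := eqVneq (blue_at e B F i) setT.
  rewrite (blue_at_full_mono (leqnSn i) full_i) -full_i.
  by apply: leq_trans IH _; rewrite leq_add2l leq_mul2r leqnSn orbT.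
have := card_blue_atS i (fun v w w' => set_of_forces_functional F_forces).
have := card_ready_lt proper_i.
rewrite mulSn; move: (i * _) IH => X; lia.
Qed.

End HoppingRounds.

Lemma path_graph_connected n : connected_graph (path_graph n).
Proof.
move=> U U_closed /set0Pn[x0 x0U].
have shift k (x y : 'I_n) : y = x + k :> nat -> (x \in U) = (y \in U).
  elim: k x y => [|k IH] x y ey; first by rewrite addn0 in ey; rewrite (val_inj ey).
  have lt_xk_n : x + k < n by have := ltn_ord y; lia.
  rewrite (IH x (Ordinal lt_xk_n)) //; apply/idP/idP; apply: U_closed;
    by rewrite /path_graph /= ey addnS eqxx ?orbT.
apply/setP=> y; rewrite inE; case: (leqP x0 y) => [le_x0y | lt_yx0].
  by rewrite -(shift (y - x0) x0) ?subnKC.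
by rewrite (shift (x0 - y) y x0) ?subnKC // ltnW.
Qed.

Lemma cover_amgm b t n : n <= b + t * b.-1 -> 4 * n.-1 <= (b + t) ^ 2.
Proof.
case: b => [|b] cover; first by rewrite /= muln0 leqn0 in cover; rewrite (eqP cover).
have : 4 * (b * t.+1) <= (b + t.+1) ^ 2 by rewrite nat_AGM2.
rewrite addnS -addSn; apply: leq_trans; rewrite mulnS [b * t]mulnC; lia.
Qed.

Lemma path_forcing_lower n (B : {set 'I_n}) F t :
  set_of_forces (path_graph n) B F -> blue_at (path_graph n) B F t = setT ->
  4 * n.-1 <= (#|B| + t) ^ 2.
Proof.
move=> F_forces full_t; apply: cover_amgm.
have := card_blue_at_le (@path_graph_connected n) t F_forces.
by rewrite full_t cardsT card_ord.
Qed.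

Section JumpForcing.
Variables (m d : nat).
Hypothesis d_gt0 : 0 < d.
Local Notation P := (path_graph m.+1).

Definition first_vertices (c : nat) : {set 'I_m.+1} := [set x : 'I_m.+1 | x < c].

Definition jump_forces : seq ('I_m.+1 * 'I_m.+1) :=
  [seq (inord v, inord (v + d.+1)) | v <- iota 0 (m - d)].

Lemma card_first_vertices c : #|first_vertices c| <= c.
Proof.
have : first_vertices c \subset [set inord j | j : 'I_c].
  apply/subsetP=> x; rewrite inE => lt_xc.
  by apply/imsetP; exists (Ordinal lt_xc); rewrite ?inord_val.
move/subset_leq_card/leq_trans; apply.
by rewrite (leq_trans (leq_imset_card _ _)) ?card_ord.
Qed.

Lemma setU1_first_vertices c :
  c <= m -> inord c |: first_vertices c = first_vertices c.+1.
Proof.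
move=> le_cm; apply/setP=> x; rewrite !inE -val_eqE /= inordK // ltnS.
by rewrite [(x <= c)]leq_eqVlt.
Qed.

Lemma mem_jump_forces v w :
  ((v, w) \in jump_forces) = (v < m - d) && (w == v + d.+1 :> nat).
Proof.
apply/mapP/andP=> [[j] | [lt_v eq_w]].
  by rewrite mem_iota add0n => lt_j [-> ->]; rewrite !inordK //; lia.
exists (val v); first by rewrite mem_iota add0n lt_v.
by rewrite -(eqP eq_w) !inord_val.
Qed.

Lemma chrono_ok_jump j k : j + k = m - d ->
  chrono_ok P (first_vertices (k + d.+1)) (first_vertices k)
    [seq (inord v, inord (v + d.+1)) | v <- iota k j].
Proof.
elim: j k => [|j IH] k //= jk; apply/andP; split.
  rewrite /can_force !inE !inordK; [|lia|lia].
  apply/and4P; split; [lia | lia | lia |].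
  by apply/subsetP=> u; rewrite !inE /path_graph inordK; [case/orP=> /eqP; lia | lia].
rewrite setU1_first_vertices ?setU1_first_vertices; [|lia|lia].
by rewrite -addSn; apply: IH; lia.
Qed.

Lemma blue_after_jump : blue_after (first_vertices d.+1) jump_forces = setT.
Proof.
apply/setP=> w; rewrite !inE; case: (ltnP w d.+1) => //= le_dw.
apply/imsetP; exists (inord (w - d.+1), w) => //.
rewrite inE mem_jump_forces inordK; have := ltn_ord w; lia.
Qed.

Lemma chrono_list_jump : chrono_list P (first_vertices d.+1) jump_forces.
Proof.
apply/andP; split.
  have := @chrono_ok_jump (m - d) 0 (addn0 _).
  by have -> : first_vertices 0 = set0 by apply/setP=> x; rewrite !inE.
by apply/existsP=> -[v /existsP[w /and4P[_]]]; rewrite blue_after_jump inE.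
Qed.

Lemma blue_at_jump i :
  blue_at P (first_vertices d.+1) [set q in jump_forces] i =
  first_vertices (d.+1 + i * d).
Proof.
elim: i => [|i IH]; first by rewrite addn0.
rewrite [LHS]/= IH; apply/setP=> x; rewrite !inE mulSn.
have := ltn_ord x; set c := d.+1 + i * d => lt_xm.
apply/idP/idP.
  case/orP=> [|/existsP[v /and3P[]]]; first by lia.
  rewrite !inE mem_jump_forces => /andP[lt_v /eqP ->] lt_vc /subsetP /(_ (inord v.+1)).
  rewrite !inE /path_graph inordK; [lia | lia].
case: (ltnP x c) => //= le_cx lt_x.
apply/existsP; exists (inord (x - d.+1)); rewrite !inE mem_jump_forces inordK; last lia.
apply/and3P; split; [lia | lia |].
by apply/subsetP=> u; rewrite !inE /path_graph inordK; [case/orP=> /eqP; lia | lia].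
Qed.

Lemma path_jump_forcing t : m < d.+1 + t * d ->
  exists B F, [/\ hopping_forcing_set P B, set_of_forces P B F,
                  blue_at P B F t = setT & #|B| <= d.+1].
Proof.
move=> cover; exists (first_vertices d.+1), [set q in jump_forces]; split.
- by exists jump_forces; split; [exact: chrono_list_jump | exact: blue_after_jump].
- by exists jump_forces; split; first exact: chrono_list_jump.
- by rewrite blue_at_jump; apply/setP=> x; rewrite !inE; have := ltn_ord x; lia.
- exact: card_first_vertices.
Qed.

End JumpForcing.

Lemma leq_ceil_two_sqrt (m x : nat) :
  (absz (Num.ceil (2 * Num.sqrt (m%:R : Rdefinitions.R)))%R <= x) = (4 * m <= x ^ 2).
Proof.
set y := (2 * Num.sqrt _)%R.
have y_ge0 : (0 <= y)%R by rewrite mulr_ge0 ?sqrtr_ge0.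
have y2 : (y ^+ 2 = (4 * m)%:R)%R.
  by rewrite exprMn sqr_sqrtr ?ler0n // natrM -natrX.
have ceil_ge0 : (0 <= Num.ceil y)%R by rewrite ceil_ge0 (lt_le_trans _ y_ge0) ?ltrN10.
rewrite -lez_nat gez0_abs // ceil_le_int -(ler_nat Rdefinitions.R) natrX -y2.
by rewrite ler_sqr ?nnegrE ?ler0n.
Qed.

Lemma half_cover k m : 0 < m -> 4 * m <= k ^ 2 ->
  [/\ 0 < k./2, k./2 < k & m < (k./2).+1 + (k - (k./2).+1) * k./2].
Proof.
move=> m_gt0; have := odd_double_half k; rewrite -muln2.
move: (odd k) (k./2) => r [|d] <-; rewrite expnS expn1 => m_le.
  by case: r m_le => /=; lia.
by case: r m_le => /= m_le; split; nia.
Qed.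

Local Open Scope ring_scope.

Theorem proposition3p5 (n : nat) : (2 <= n)%N ->
  th_H_is (path_graph n)
    (absz (Num.ceil (2 * Num.sqrt ((n.-1)%:R : Rdefinitions.R)))).
Proof.
case: n => [|m] //; rewrite ltnS => m_gt0; set k := absz _.
have k_least x : (k <= x)%N = (4 * m <= x ^ 2)%N := leq_ceil_two_sqrt m x.
split=> [|B F t _ F_forces full_t]; last first.
  by rewrite k_least; exact: path_forcing_lower F_forces full_t.
have k_sq : (4 * m <= k ^ 2)%N by rewrite -k_least.
have [d_gt0 lt_dk cover] := half_cover m_gt0 k_sq.
have [B [F [B_forcing F_forces full_t le_B_d]]] := path_jump_forcing d_gt0 cover.
have le_Bk : (#|B| <= k)%N := leq_trans le_B_d lt_dk.
exists B, F, (k - #|B|)%N; split; [|split; [|split]] => //; last exact: subnKC.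
exact: (blue_at_full_mono (F := F) (leq_sub2l k le_B_d) full_t).
Qed.
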